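(* Let $n\ge1$, $\bar M_0=\{u\in\mathbb{C}^{n+2}\mid u_1\cdots u_{n+2}=1,\ u_1+\cdots+u_{n+2}=0\}$, and $\varpi:\bar M_0\to\mathbb{C}^\times$, $\varpi(u)=u_1$. The critical values of $\varpi$ are exactly the $n+2$ solutions $u_1$ of the equation $$u_1^{n+2}=(-1)^{n+1}(n+1)^{n+1}.$$ *)

(* The complex numbers are modelled by an arbitrary
   numClosedFieldType C (algebraically closed field of char 0 with a
   complex-like norm structure); this includes algC and complex R. *)
From mathcomp Require Import all_boot all_order all_algebra.
Set Implicit Arguments. Unset Strict Implicit. Unset Printing Implicit Defensive.
Import Order.TTheory GRing.Theory Num.Theory.
Local Open Scope ring_scope.

(* Points of C^(n+2) are functions 'I_(n+2) -> C; coordinate u_1 is u ord0. *)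

Definition M0bar (C : numClosedFieldType) (n : nat) (u : 'I_n.+2 -> C) : Prop :=
  \prod_(i < n.+2) u i = 1 /\ \sum_(i < n.+2) u i = 0.

(* Tangent space of M0bar at u: the kernel of the differentials of the two
   defining equations f1 = prod u_i - 1 and f2 = sum u_i
   (d f1 = sum_i (prod_{j<>i} u_j) du_i,  d f2 = sum_i du_i). *)
Definition tangentM0bar (C : numClosedFieldType) (n : nat) (u v : 'I_n.+2 -> C) : Prop :=
  \sum_(i < n.+2) (\prod_(j < n.+2 | j != i) u j) * v i = 0 /\
  \sum_(i < n.+2) v i = 0.

(* The map varpi(u) = u_1 (a linear map, so d varpi (v) = v_1).
   u is a critical point of varpi on M0bar iff d varpi vanishes on the
   tangent space at u. *)
Definition varpi (C : numClosedFieldType) (n : nat) (u : 'I_n.+2 -> C) : C := u ord0.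

Definition critical_point (C : numClosedFieldType) (n : nat) (u : 'I_n.+2 -> C) : Prop :=
  M0bar u /\ forall v : 'I_n.+2 -> C, tangentM0bar u v -> varpi v = 0.

Definition critical_value (C : numClosedFieldType) (n : nat) (c : C) : Prop :=
  exists u : 'I_n.+2 -> C, critical_point u /\ varpi u = c.

(* The tangent space at u is cut out by the forms v |-> sum_i u_i^-1 v_i and
   v |-> sum_i v_i, since the product of the other coordinates is u_i^-1.
   The form v |-> v_1 vanishes on this kernel iff it is a combination of the
   two forms, i.e. iff u_2 = ... = u_(n+2) =: w and u_1 <> w.  The equations of
   M0bar then read u_1 w^(n+1) = 1 and u_1 + (n+1) w = 0; eliminating w gives
   u_1^(n+2) = (-1)^(n+1) (n+1)^(n+1), and u_1 <> w is automatic.  This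
   binomial equation has n+2 distinct roots, being separable in characteristic
   zero. *)
From mathcomp Require Import all_boot all_order all_algebra.
From mathcomp Require Import separable ring.
Set Implicit Arguments.
Unset Strict Implicit.
Unset Printing Implicit Defensive.

Import Order.TTheory GRing.Theory Num.Theory.
Local Open Scope ring_scope.

Lemma sum_mul_delta (R : pzSemiRingType) (I : finType) (F : I -> R) (i : I) :
  \sum_j F j * (j == i)%:R = F i.
Proof.
by rewrite (bigD1 i) //= eqxx mulr1 big1 ?addr0 // => j /negbTE ->; rewrite mulr0.
Qed.

Lemma prod_but_eq_inv (F : fieldType) (I : finType) (u : I -> F) (k : I) :
  \prod_i u i = 1 -> \prod_(j | j != k) u j = (u k)^-1.
Proof.
rewrite (bigD1 k) //= => uP.
have uk_neq0 : u k != 0.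
  by apply: contra_eq_neq uP => ->; rewrite mul0r eq_sym oner_neq0.
by rewrite -[LHS](mulKf uk_neq0) uP mulr1.
Qed.

Section CoordinateOnKernel.

Variables (F : fieldType) (I : finType) (i0 : I) (a : I -> F).

Lemma kernel_coef_eq :
    (forall v : I -> F, \sum_i a i * v i = 0 -> \sum_i v i = 0 -> v i0 = 0) ->
  {in predC1 i0 &, forall i j, a i = a j}.
Proof.
move=> kill i j; rewrite !inE => i_neq0 j_neq0.
(* The cross product of (a i0, a i, a j) and (1, 1, 1). *)
pose v k := (a i - a j) * (k == i0)%:R + (a j - a i0) * (k == i)%:R
            + (a i0 - a i) * (k == j)%:R.
have : v i0 = 0.
  apply: kill.
    under eq_bigr do rewrite /v !mulrDr !mulrA.
    by rewrite !big_split /= !sum_mul_delta; ring.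
  by rewrite !big_split /= !(sum_mul_delta (fun=> _)); ring.
rewrite /v eqxx !(eq_sym i0) (negbTE i_neq0) (negbTE j_neq0).
by rewrite !mulr0 !addr0 mulr1 => /eqP; rewrite subr_eq0 => /eqP.
Qed.

Lemma kernel_coef_const (alpha : F) :
    (forall i, i != i0 -> a i = alpha) -> a i0 != alpha ->
  forall v : I -> F, \sum_i a i * v i = 0 -> \sum_i v i = 0 -> v i0 = 0.
Proof.
move=> a_tail a0_neq v; rewrite (bigD1 i0) //= [in X in _ -> X](bigD1 i0) //=.
have -> : \sum_(i | i != i0) a i * v i = alpha * \sum_(i | i != i0) v i.
  by rewrite mulr_sumr; apply: eq_bigr => i /a_tail ->.
move=> av0 /eqP; rewrite addrC addr_eq0 => /eqP v_tail.
move: av0; rewrite v_tail mulrN -mulrBl => /eqP.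
by rewrite mulf_eq0 subr_eq0 (negbTE a0_neq) => /eqP.
Qed.

End CoordinateOnKernel.

Lemma solve_prod1_sum0 (F : fieldType) m (N c w : F) : N != 0 ->
  (c * w ^+ m = 1 /\ c + w * N = 0) <->
  (w = - (c / N) /\ c ^+ m.+1 = (-1) ^+ m * N ^+ m).
Proof.
move=> N_neq0; split=> [[cw1 /eqP] | [-> cm]].
  rewrite addr_eq0 => /eqP c_def; split; first by rewrite c_def mulNr mulfK ?opprK.
  by rewrite exprS {2}c_def [in LHS]exprNn exprMn mulrCA [c * _]mulrA cw1 mul1r.
split; last by rewrite mulNr divfK ?subrr.
rewrite exprNn expr_div_n mulrCA [c * _]mulrA -exprS cm mulfK ?expf_neq0 //.
by rewrite -exprMn mulrNN mulr1 expr1n.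
Qed.

Lemma separable_XnsubC (R : idomainType) m (a : R) :
  m%:R != 0 :> R -> a != 0 -> separable_poly ('X^m - a%:P).
Proof.
case: m => [/eqP // | m m_neq0 a_neq0]; rewrite unlock linearB /= derivC subr0.
rewrite derivXn -scaler_nat coprimepZr //= exprS coprimep_sym coprimep_addl_mul.
by rewrite -alg_polyC -scaleNr coprimepZr ?oppr_eq0 ?coprimep1.
Qed.

Lemma closed_XnsubC_roots (F : closedFieldType) m (a : F) :
    m%:R != 0 :> F -> a != 0 ->
  exists s : seq F, [/\ uniq s, size s = m & forall c, (c \in s) = (c ^+ m == a)].
Proof.
move=> m_neq0 a_neq0.
have m_gt0 : (0 < m)%N by rewrite lt0n; apply: contraNneq m_neq0 => ->.
have [s Ds] := closed_field_poly_normal ('X^m - a%:P).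
rewrite lead_coefXnsubC // scale1r in Ds.
exists s; split.
- by rewrite -separable_prod_XsubC -Ds separable_XnsubC.
- by have := size_XnsubC a m_gt0; rewrite Ds size_prod_XsubC => -[].
- by move=> c; rewrite -root_prod_XsubC -Ds /root !hornerE subr_eq0.
Qed.

Section CriticalValues.

Variables (C : numClosedFieldType) (n : nat).

Lemma critical_point_tail_eq (u : 'I_n.+2 -> C) :
  critical_point u -> {in predC1 ord0 &, forall i j, u i = u j}.
Proof.
case=> [[prod1 _] kill] i j i_neq0 j_neq0; apply: invr_inj.
rewrite -!prod_but_eq_inv //.
by apply: (kernel_coef_eq (fun v t1 t2 => kill v (conj t1 t2))).
Qed.

Lemma M0bar_tail_const (u : 'I_n.+2 -> C) (w : C) :
    (forall k, k != ord0 -> u k = w) ->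
  M0bar u <-> u ord0 * w ^+ n.+1 = 1 /\ u ord0 + w * (n.+1)%:R = 0.
Proof.
move=> u_tail; have tail (i : 'I_n.+1) : true -> u (lift ord0 i) = w.
  by rewrite u_tail ?neq_lift.
rewrite /M0bar big_ord_recl [X in _ /\ X = 0]big_ord_recl.
rewrite (eq_bigr (fun=> w) tail) (eq_bigr (fun=> w) tail).
by rewrite prodr_const sumr_const card_ord mulr_natr.
Qed.

Lemma critical_valueP (c : C) :
  critical_value n c <-> c ^+ n.+2 = (-1) ^+ n.+1 * (n.+1)%:R ^+ n.+1.
Proof.
have N_neq0 : (n.+1)%:R != 0 :> C by rewrite pnatr_eq0.
split=> [[u [crit_u <-]] | c_eq].
  have u_tail k : k != ord0 -> u k = u (lift ord0 ord0).
    by move=> k_neq0; apply: (critical_point_tail_eq crit_u); rewrite inE ?neq_lift.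
  by have /(M0bar_tail_const u_tail)/(solve_prod1_sum0 _ _ _ N_neq0) [] := crit_u.1.
pose w := - (c / (n.+1)%:R); pose u (k : 'I_n.+2) := if k == ord0 then c else w.
have u_tail k : k != ord0 -> u k = w by rewrite /u => /negbTE ->.
have [cw1 cwN] : c * w ^+ n.+1 = 1 /\ c + w * (n.+1)%:R = 0.
  exact/(solve_prod1_sum0 _ _ _ N_neq0).
have M0u : M0bar u by apply/(M0bar_tail_const u_tail); rewrite /u eqxx.
exists u; split; last by rewrite /varpi /u eqxx.
split=> [// | v [t1 t2]]; apply: (kernel_coef_const (alpha := w^-1) _ _ t1 t2).
  by move=> i /u_tail <-; rewrite prod_but_eq_inv //; case: M0u.
rewrite prod_but_eq_inv; last by case: M0u.
rewrite {1}/u eqxx; apply/eqP => /invr_inj c_eq_w.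
move: cwN; rewrite -c_eq_w -{1}[c]mulr1 -mulrDr => /eqP; rewrite mulf_eq0.
case/orP=> [/eqP c0 | ].
  by move: cw1; rewrite c0 mul0r => /esym/eqP; rewrite oner_eq0.
by rewrite -(natrD _ 1 n.+1) add1n pnatr_eq0.
Qed.

End CriticalValues.

Theorem mainTheorem9 (C : numClosedFieldType) (n : nat) (hn : (1 <= n)%N) :
  (forall c : C, critical_value n c <->
     c ^+ n.+2 = (-1) ^+ n.+1 * (n.+1)%:R ^+ n.+1) /\
  (exists s : seq C, uniq s /\ size s = n.+2 /\
     forall c : C, c \in s <-> critical_value n c).
Proof.
split=> [c | ]; first exact: critical_valueP.
have K_neq0 : (-1) ^+ n.+1 * (n.+1)%:R ^+ n.+1 != 0 :> C.
  by rewrite mulf_neq0 ?signr_eq0 ?expf_neq0 ?pnatr_eq0.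
have [|s [s_uniq s_size s_roots]] := closed_XnsubC_roots (m := n.+2) _ K_neq0.
  by rewrite pnatr_eq0.
exists s; split=> //; split=> // c.
by rewrite s_roots; split=> [/eqP/critical_valueP | /critical_valueP/eqP].
Qed.
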